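(* Let $\mathcal F=(A,X,f)$ and $\mathcal G=(B,X,g)$ be fuzzy automata and let $\varphi:\mathcal F\to\mathcal G$ be an epimorphism. Then $\varphi(\mathcal F(a,w))=\mathcal G(\varphi(a),w)$ for all $a\in A$ and $w\in X^*$.
   Context: A fuzzy automaton is a triple $\mathcal F=(A,X,f)$ with $A$ a finite nonempty set of states, $X$ a finite nonempty alphabet, and $f:A\times X\times A\to[0,1]$, extended to words by $f^*(a,\varepsilon,a)=1$, $f^*(a,\varepsilon,b)=0$ ($b\neq a$), $f^*(a,vx,b)=\max_{c\in A}\min\{f^*(a,v,c),f(c,x,b)\}$ (and similarly $g^*$ for $\mathcal G$). Let $\mathcal F(a,w)=\{b\in A\mid f^*(a,w,b)>0\}$. A mapping $\varphi:A\to B$ is a homomorphism $\mathcal F\to\mathcal G$ if $g(\varphi(a),x,b)=\max\{f(a,x,a')\mid a'\in A,\ \varphi(a')=b\}$ for all $a\in A$, $b\in B$, $x\in X$ (the maximum of the empty set being $0$); it is an epimorphism if it is moreover surjective. *)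

From mathcomp Require Import all_boot all_order all_algebra.
Set Implicit Arguments. Unset Strict Implicit. Unset Printing Implicit Defensive.
Import Order.TTheory GRing.Theory Num.Theory.
Local Open Scope ring_scope.

Definition fuzzy_valued (R : realDomainType) (A X : finType) (f : A -> X -> A -> R) :=
  forall a x b, 0 <= f a x b <= 1.

(* one step: given the row d = f*(a, v, _), compute f*(a, v x, _):
   b |-> max_{c in A} min (d c) (f c x b) ; max of empty (unused here) = 0 *)
Definition fstep (R : realDomainType) (A X : finType) (f : A -> X -> A -> R)
  (d : A -> R) (x : X) : A -> R :=
  fun b => \big[Num.max/0]_(c : A) Num.min (d c) (f c x b).

Definition fstar (R : realDomainType) (A X : finType) (f : A -> X -> A -> R)
  (a : A) (w : seq X) : A -> R :=
  foldl (fstep f) (fun b => if b == a then 1 else 0) w.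

Definition reach (R : realDomainType) (A X : finType) (f : A -> X -> A -> R)
  (a : A) (w : seq X) : {set A} :=
  [set b | 0 < fstar f a w b].

Definition fa_hom (R : realDomainType) (A B X : finType)
  (f : A -> X -> A -> R) (g : B -> X -> B -> R) (phi : A -> B) :=
  forall (a : A) (b : B) (x : X),
    g (phi a) x b = \big[Num.max/0]_(a' : A | phi a' == b) f a x a'.

Definition fa_epi (R : realDomainType) (A B X : finType)
  (f : A -> X -> A -> R) (g : B -> X -> B -> R) (phi : A -> B) :=
  fa_hom f g phi /\ (forall b : B, exists a : A, phi a = b).

From mathcomp Require Import all_boot all_order all_algebra.
Import Order.TTheory GRing.Theory Num.Theory.
Set Implicit Arguments. Unset Strict Implicit. Unset Printing Implicit Defensive.
Local Open Scope ring_scope.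

(* A max with default 0 is positive iff some argument is, and a min iff both
   are, so the support [reach f a w] follows the run of the crisp automaton
   with transitions [0 < f c x b].  A homomorphism maps one crisp step onto
   the other, and induction on [w] concludes. *)

Lemma bigmax_gt_idx disp (T : orderType disp) (I : finType) (x0 : T)
    (P : pred I) (F : I -> T) :
  (x0 < \big[Order.max/x0]_(i | P i) F i)%O = [exists i, P i && (x0 < F i)%O].
Proof.
apply/idP/idP => [|/existsP[i /andP[Pi x0Fi]]].
  rewrite ltNge; apply: contraNT; rewrite negb_exists => /forallP notF.
  apply/bigmax_leP; split=> // i Pi.
  by have := notF i; rewrite Pi leNgt.
exact: lt_le_trans x0Fi (le_bigmax_cond _ _ Pi).
Qed.

Section CrispStep.

Variables (R : realDomainType) (A X : finType) (f : A -> X -> A -> R).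

Definition supp_step (S : {set A}) (x : X) : {set A} :=
  [set b | [exists c in S, 0 < f c x b]].

Lemma fstep_gt0 (d : A -> R) (x : X) (b : A) :
  (0 < fstep f d x b) = [exists c, (0 < d c) && (0 < f c x b)].
Proof.
rewrite /fstep bigmax_gt_idx.
by apply: eq_existsb => c; rewrite lt_min.
Qed.

Lemma reach_nil (a : A) : reach f a [::] = [set a].
Proof.
apply/setP => b; rewrite !inE /fstar /=.
by case: (b == a); rewrite ?ltr01 ?ltxx.
Qed.

Lemma reach_rcons (a : A) (v : seq X) (x : X) :
  reach f a (rcons v x) = supp_step (reach f a v) x.
Proof.
apply/setP => b; rewrite !inE /fstar foldl_rcons fstep_gt0.
by apply: eq_existsb => c; rewrite inE.
Qed.

End CrispStep.

Lemma imset_supp_step (R : realDomainType) (A B X : finType)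
    (f : A -> X -> A -> R) (g : B -> X -> B -> R) (phi : A -> B) :
  fa_hom f g phi ->
  forall (S : {set A}) (x : X),
    phi @: supp_step f S x = supp_step g (phi @: S) x.
Proof.
move=> hom S x; apply/setP => b; rewrite inE.
apply/imsetP/existsP => [[a' ]|[c' /andP[/imsetP[c Sc ->]]]].
  rewrite inE => /existsP[c /andP[Sc fcxa']] ->.
  exists (phi c); rewrite imset_f //= hom bigmax_gt_idx.
  by apply/existsP; exists a'; rewrite eqxx.
rewrite hom bigmax_gt_idx => /existsP[a' /andP[/eqP <- fca']].
by exists a' => //; rewrite inE; apply/existsP; exists c; rewrite Sc.
Qed.

Theorem lemma6p3 (R : realDomainType) (A B X : finType)
  (f : A -> X -> A -> R) (g : B -> X -> B -> R) (phi : A -> B) :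
  (0 < #|A|)%N -> (0 < #|B|)%N -> (0 < #|X|)%N ->
  fuzzy_valued f -> fuzzy_valued g ->
  fa_epi f g phi ->
  forall (a : A) (w : seq X), phi @: reach f a w = reach g (phi a) w.
Proof.
move=> _ _ _ _ _ [hom _] a.
elim/last_ind => [|v x IH]; first by rewrite !reach_nil imset_set1.
by rewrite !reach_rcons (imset_supp_step hom) IH.
Qed.
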